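(* Let $R=K[x_1,\ldots,x_n]$ be a polynomial ring over a field $K$, let $I\subset R$ be a monomial ideal, $t$ a positive integer, $\mathfrak{p}$ a monomial prime ideal of $R$, and $y_1,\ldots,y_s$ distinct variables of $R$ such that for each $i=1,\ldots,s$ we have $\mathfrak{p}\setminus y_i\notin \mathrm{Ass}(R/(I\setminus y_i)^t)$. Then $\mathfrak{p}\in\mathrm{Ass}(R/I^t)$ if and only if $\mathfrak{p}\in\mathrm{Ass}\big(R/(I^t:\prod_{i=1}^s y_i)\big)$.
   Context: For a monomial ideal $I\subset R$, $\mathcal{G}(I)$ denotes its unique minimal set of monomial generators. For a variable $x_i$, the deletion $I\setminus x_i$ is the monomial ideal of $R$ generated by those $u\in\mathcal{G}(I)$ with $x_i\nmid u$ (equivalently, obtained by setting $x_i=0$ in every minimal generator). In particular, for a monomial prime ideal $\mathfrak{p}$ (generated by a set of variables), $\mathfrak{p}\setminus x_i$ is the ideal generated by the variables of $\mathfrak{p}$ other than $x_i$. $\mathrm{Ass}(R/J)$ is the set of associated primes of $R/J$. *)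

From mathcomp Require Import all_boot all_algebra.
From mathcomp Require Import mpoly.
Set Implicit Arguments. Unset Strict Implicit. Unset Printing Implicit Defensive.
Import GRing.Theory.
Local Open Scope ring_scope.

Section MonomialIdeals.
Variables (n : nat) (K : fieldType).
Local Notation R := {mpoly K[n]}.

Definition subsetR := R -> Prop.

Definition ideal_gen (S : subsetR) : subsetR :=
  fun f => exists l : seq (R * R),
    (forall p, p \in l -> S p.2) /\ f = \sum_(p <- l) p.1 * p.2.

Definition is_ideal (J : subsetR) : Prop :=
  J 0 /\ (forall a b, J a -> J b -> J (a + b)) /\ (forall r a, J a -> J (r * a)).

Definition monideal (G : 'X_{1..n} -> Prop) : subsetR :=
  ideal_gen (fun f => exists m, G m /\ f = 'X_[m]).

Definition min_gens (I : subsetR) : 'X_{1..n} -> Prop :=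
  fun m => I 'X_[m] /\ (forall m', I 'X_[m'] -> lem m' m -> m' = m).

Definition deletion (I : subsetR) (i : 'I_n) : subsetR :=
  monideal (fun m => min_gens I m /\ m i = 0%N).

Definition ideal_mul (I J : subsetR) : subsetR :=
  ideal_gen (fun f => exists a b, I a /\ J b /\ f = a * b).

Fixpoint ideal_pow (I : subsetR) (t : nat) : subsetR :=
  match t with
  | 0 => ideal_gen (fun f => f = 1)
  | t'.+1 => ideal_mul (ideal_pow I t') I
  end.

Definition colon (J : subsetR) (f : R) : subsetR := fun g => J (g * f).

Definition is_prime_ideal (P : subsetR) : Prop :=
  is_ideal P /\ ~ P 1 /\ (forall a b, P (a * b) -> P a \/ P b).

Definition Ass (J : subsetR) (P : subsetR) : Prop :=
  is_prime_ideal P /\ exists f : R, forall g, P g <-> colon J f g.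

Definition var_prime (A : {set 'I_n}) : subsetR :=
  ideal_gen (fun f => exists i, i \in A /\ f = 'X_i).

End MonomialIdeals.

(** A monomial ideal is determined by the set of exponent vectors of the
monomials it contains, so everything can be read off exponent vectors.  If
the monomial prime [p] is associated to [I^t], it is of the form
[(I^t : x^v)] for a single monomial [x^v].  The exponent [v] cannot vanish at
any [y_i]: otherwise [x^v] would also witness [p \ y_i] as an associated
prime of [(I \ y_i)^t], since minimal generators of [I] avoiding [y_i] are
exactly the generators relevant to monomials avoiding [y_i].  Hence
[x^v = x^w * y_1 ... y_s], and [p = ((I^t : y_1 ... y_s) : x^w)].  The
converse holds for any colon ideal. *)

From mathcomp Require Import all_boot all_algebra.
From mathcomp Require Import mpoly.
From mathcomp Require Import ring zify.
From Stdlib Require Import Classical FunctionalExtensionality PropExtensionality.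
Set Implicit Arguments. Unset Strict Implicit. Unset Printing Implicit Defensive.
Import GRing.Theory.
Local Open Scope ring_scope.

Section IdealsGenerated.
Variables (n : nat) (K : fieldType).
Local Notation R := {mpoly K[n]}.
Implicit Types (S J : subsetR n K).

Lemma ideal_gen_is_ideal S : is_ideal (ideal_gen S).
Proof.
split; [|split].
- by exists [::]; rewrite big_nil.
- move=> a b [l1 [H1 ->]] [l2 [H2 ->]]; exists (l1 ++ l2).
  by split=> [p|]; [rewrite mem_cat => /orP [/H1|/H2] | rewrite big_cat].
- move=> r a [l [H ->]]; exists [seq (r * p.1, p.2) | p <- l]; split.
  + by move=> p /mapP [q /H Hq ->].
  + by rewrite big_map mulr_sumr; apply: eq_bigr => p _; rewrite mulrA.
Qed.

Lemma ideal_gen_mem S x : S x -> ideal_gen S x.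
Proof.
move=> Sx; exists [:: (1, x)].
by split=> [p|]; [rewrite inE => /eqP -> | rewrite big_seq1 mul1r].
Qed.

Lemma ideal_sum J (T : eqType) (r : seq T) (F : T -> R) :
  is_ideal J -> (forall i, i \in r -> J (F i)) -> J (\sum_(i <- r) F i).
Proof.
move=> [J0 [JD _]]; elim: r => [|x r IH] H; first by rewrite big_nil.
rewrite big_cons; apply: JD; first by apply: H; rewrite inE eqxx.
by apply: IH => i Hi; apply: H; rewrite inE Hi orbT.
Qed.

Lemma ideal_gen_min S J f :
  is_ideal J -> (forall x, S x -> J x) -> ideal_gen S f -> J f.
Proof.
move=> HJ HS [l [Hl ->]]; apply: ideal_sum => // p Hp.
by case: HJ => _ [_ JM]; apply/JM/HS/Hl.
Qed.

Lemma Ass_colon J h P : Ass (colon J h) P -> Ass J P.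
Proof.
move=> [HP [f Hf]]; split=> //; exists (f * h) => g.
by rewrite Hf /colon mulrA.
Qed.

End IdealsGenerated.

Section MonomialIdeals.
Variables (n : nat) (K : fieldType).
Local Notation R := {mpoly K[n]}.
Implicit Types (M P : 'X_{1..n} -> Prop) (m v w e : 'X_{1..n}) (A : {set 'I_n}).

(* Exponent vectors of the monomials in [monideal M]. *)
Definition upset M m := exists g, M g /\ (g <= m)%MM.

Lemma lepm_add m1 m2 m1' m2' :
  (m1 <= m1')%MM -> (m2 <= m2')%MM -> (m1 + m2 <= m1' + m2')%MM.
Proof.
move=> /mnm_lepP l1 /mnm_lepP l2; apply/mnm_lepP => i.
by rewrite !mnmDE leq_add.
Qed.

Lemma upset_mono M m m' : upset M m -> (m <= m')%MM -> upset M m'.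
Proof. by move=> [g [Mg gm]] mm'; exists g; split => //; apply: lepm_trans mm'. Qed.

Lemma upset_self M m : M m -> upset M m.
Proof. by move=> Mm; exists m; split => //; apply: lepm_refl. Qed.

Lemma monideal_is_ideal M : is_ideal (monideal (K:=K) M).
Proof. exact: ideal_gen_is_ideal. Qed.

Lemma monidealP M f :
  monideal (K:=K) M f <-> forall m, m \in msupp f -> upset M m.
Proof.
split.
- apply: (ideal_gen_min (J := fun f : R => forall m, m \in msupp f -> upset M m)).
  + split; [|split].
    * by move=> m; rewrite -mpolyC0 msupp0.
    * by move=> a b Ha Hb m /msuppD_le; rewrite mem_cat => /orP [/Ha|/Hb].
    * move=> r a Ha m /msuppM_le /allpairsP [[m1 m2] [/= _ /Ha H2 ->]].
      by apply: upset_mono H2 _; apply: lem_addl.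
  + by move=> x [m [Mm ->]] m'; rewrite msuppX inE => /eqP ->; apply: upset_self.
- move=> H; rewrite (mpolyE f); apply: ideal_sum; first exact: monideal_is_ideal.
  move=> m /H [g [Mg gm]].
  rewrite -mul_mpolyC -(submK gm) mpolyXD mulrA.
  case: (monideal_is_ideal M) => _ [_ JM]; apply/JM/ideal_gen_mem.
  by exists g.
Qed.

Lemma monidealX M m : monideal (K:=K) M 'X_[m] <-> upset M m.
Proof.
rewrite monidealP; split; first by apply; rewrite msuppX inE.
by move=> H m'; rewrite msuppX inE => /eqP ->.
Qed.

Lemma monidealMX M v g :
  monideal (K:=K) M (g * 'X_[v]) <->
  forall m, m \in msupp g -> upset M (v + m)%MM.
Proof.
rewrite monidealP; split => H m Hm.
- by apply: H; rewrite (perm_mem (msuppMX _ _)); apply/mapP; exists m.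
- by move: Hm; rewrite (perm_mem (msuppMX _ _)) => /mapP [m' Hm' ->]; apply: H.
Qed.

Lemma monideal_colonX M P v :
  (forall w, upset P w <-> upset M (v + w)%MM) ->
  forall g, monideal (K:=K) P g <-> colon (monideal M) 'X_[v] g.
Proof. by move=> HPM g; rewrite /colon monidealMX monidealP; split=> H m /H /HPM. Qed.

Fixpoint mpow_gens M (t : nat) : 'X_{1..n} -> Prop :=
  match t with
  | 0 => fun m => m = 0%MM
  | t'.+1 => fun m => exists a b, mpow_gens M t' a /\ M b /\ m = (a + b)%MM
  end.

Lemma ideal_pow_monideal M t :
  ideal_pow (monideal (K:=K) M) t = monideal (mpow_gens M t).
Proof.
elim: t => [|t IH] /=; apply: functional_extensionality => f.
- rewrite /monideal; congr ideal_gen; apply: functional_extensionality => {}f.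
  apply: propositional_extensionality; split.
  + by move=> ->; exists 0%MM; rewrite mpolyX0.
  + by move=> [m [-> ->]]; rewrite mpolyX0.
- rewrite IH; apply: propositional_extensionality; split.
  + apply: ideal_gen_min; first exact: monideal_is_ideal.
    move=> x [a [b [Ha [Hb ->]]]]; apply/monidealP => m.
    move/msuppM_le => /allpairsP [[m1 m2] [/= H1 H2 ->]].
    move/monidealP: Ha => /(_ _ H1) [g1 [G1 l1]].
    move/monidealP: Hb => /(_ _ H2) [g2 [G2 l2]].
    exists (g1 + g2)%MM; split; first by exists g1, g2.
    exact: lepm_add.
  + apply: ideal_gen_min; first exact: ideal_gen_is_ideal.
    move=> x [m [[a [b [Ha [Hb ->]]]] ->]]; apply: ideal_gen_mem.
    exists 'X_[a], 'X_[b]; split; first by apply: ideal_gen_mem; exists a.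
    by split; [apply: ideal_gen_mem; exists b | rewrite mpolyXD].
Qed.

Lemma mpow_gens_upset (Q : 'X_{1..n} -> Prop) M1 M2 t e :
  (forall a b, Q (a + b)%MM -> Q a /\ Q b) ->
  (forall g, M2 g -> Q g -> upset M1 g) ->
  mpow_gens M2 t e -> Q e -> upset (mpow_gens M1 t) e.
Proof.
move=> HQ H; elim: t e => [|t IH] e /=.
- by move=> -> _; apply: upset_self.
- move=> [a [b [Ha [Hb ->]]]] /HQ [Qa Qb].
  have [a' [Ha' la]] := IH _ Ha Qa.
  have [b' [Hb' lb]] := H _ Hb Qb.
  by exists (a' + b')%MM; split; [exists a', b' | apply: lepm_add].
Qed.

Lemma mpow_gens_coord0 M i t e :
  (forall d, M d -> d i = 0%N) -> mpow_gens M t e -> e i = 0%N.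
Proof.
move=> H; elim: t e => [|t IH] e /=; first by move=> ->; rewrite mnm0E.
by move=> [a [b [Ha [Hb ->]]]]; rewrite mnmDE (IH _ Ha) (H _ Hb).
Qed.

Lemma msupp_split (P : pred 'X_{1..n}) (a : R) : exists a1 a0, a = a1 + a0 /\
  (forall m, m \in msupp a1 -> P m) /\ (forall m, m \in msupp a0 -> ~~ P m).
Proof.
have supp_filter (Q : pred 'X_{1..n}) m :
    m \in msupp (\sum_(i <- msupp a | Q i) a@_i *: ('X_[i] : R)) -> Q m.
  move/msupp_sum_le/flatten_mapP => [i]; rewrite mem_filter => /andP [Qi _].
  by move/msuppZ_le; rewrite msuppX inE => /eqP ->.
exists (\sum_(m <- msupp a | P m) a@_m *: 'X_[m]).
exists (\sum_(m <- msupp a | ~~ P m) a@_m *: 'X_[m]).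
split; first by rewrite {1}(mpolyE a) (bigID P).
by split=> m /supp_filter.
Qed.

Lemma monideal_prime M (B : pred 'I_n) :
  (forall m, upset M m <-> exists i, B i /\ (0 < m i)%N) ->
  is_prime_ideal (monideal (K:=K) M).
Proof.
move=> HB.
pose inM m := [exists i, B i && (0 < m i)%N].
have memM f : monideal (K:=K) M f <-> forall m, m \in msupp f -> inM m.
  rewrite monidealP; split => H m /H; rewrite HB.
  - by move=> [i [Bi mi]]; apply/existsP; exists i; rewrite Bi mi.
  - by move/existsP => [i /andP [Bi mi]]; exists i.
have [_ [JD JM]] := monideal_is_ideal M.
have JB x z : monideal (K:=K) M x -> monideal (K:=K) M z ->
    monideal (K:=K) M (x - z).
  by move=> Hx Hz; apply: JD => //; rewrite -mulN1r; apply: JM.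
have split_supp (a : R) : exists a1 a0, a = a1 + a0 /\ monideal (K:=K) M a1 /\
     (forall m, m \in msupp a0 -> ~~ inM m).
  have [a1 [a0 [-> [Sa1 Sa0]]]] := msupp_split inM a.
  by exists a1, a0; split; [|split => //; apply/memM].
split; first exact: monideal_is_ideal.
split.
  move/memM => /(_ 0%MM); rewrite -mpolyX0 msuppX inE eqxx => /(_ isT).
  by case/existsP => i; rewrite mnm0E andbF.
move=> a b Hab.
case: (classic (monideal (K:=K) M a)) => Ha; first by left.
case: (classic (monideal (K:=K) M b)) => Hb; first by right.
exfalso.
have [a1 [a0 [Ea [Ja1 Sa0]]]] := split_supp a.
have [b1 [b0 [Eb [Jb1 Sb0]]]] := split_supp b.
have a0n : a0 != 0 by apply/eqP => E; apply: Ha; rewrite Ea E addr0.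
have b0n : b0 != 0 by apply/eqP => E; apply: Hb; rewrite Eb E addr0.
have Jab0 : monideal (K:=K) M (a0 * b0).
  have -> : a0 * b0 = a * b - (b * a1 + a0 * b1) by rewrite Ea Eb; ring.
  by apply: JB => //; apply: JD; apply: JM.
(* Any monomial in the support of [a0 * b0] is a product of monomials of
   [a0] and [b0], none of which involves a variable of [B]. *)
case E: (msupp (a0 * b0)) => [|m ms].
  by move/eqP: E; rewrite msupp_eq0 mulf_eq0 (negPf a0n) (negPf b0n).
have mS : m \in msupp (a0 * b0) by rewrite E inE eqxx.
move/memM: Jab0 => /(_ _ mS) /existsP [i /andP [Bi]].
move: mS => /msuppM_le /allpairsP [[m1 m2] [/= H1 H2 ->]].
rewrite mnmDE addn_gt0 => /orP [] Hi.
- by move/negP: (Sa0 _ H1); apply; apply/existsP; exists i; rewrite Bi Hi.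
- by move/negP: (Sb0 _ H2); apply; apply/existsP; exists i; rewrite Bi Hi.
Qed.

Lemma min_gens_upset M d : min_gens (monideal (K:=K) M) d -> upset M d.
Proof. by move=> [/monidealX]. Qed.

Lemma min_gens_exists M m :
  upset M m -> exists2 d, min_gens (monideal (K:=K) M) d & (d <= m)%MM.
Proof.
elim: {m}(mdeg m).+1 {-2}m (ltnSn (mdeg m)) => [//|k IH] m Hk Hm.
case: (classic (min_gens (monideal (K:=K) M) m)) => Hmin.
  by exists m => //; apply: lepm_refl.
have [m' Hm'] : exists m', ~ (monideal (K:=K) M 'X_[m'] -> lem m' m -> m' = m).
  apply: not_all_ex_not => H; apply: Hmin; split => //; exact/monidealX.
have [/monidealX Hm'M Hm'2] := imply_to_and _ _ Hm'.
have [m'm m'n] := imply_to_and _ _ Hm'2.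
have m'lt : (mdeg m' < mdeg m)%N.
  rewrite -(submK m'm) mdegD -{1}[mdeg m']add0n ltn_add2r lt0n mdeg_eq0.
  by apply: contra_notN m'n => /eqP E; rewrite -(submK m'm) E add0m.
have [d Hd dm'] := IH m' (leq_trans m'lt Hk) Hm'M.
by exists d => //; apply: lepm_trans m'm.
Qed.

Definition unit_exps (A : {set 'I_n}) m := exists2 i, i \in A & m = U_(i)%MM.

Lemma var_prime_monideal A : var_prime (K:=K) A = monideal (unit_exps A).
Proof.
rewrite /monideal /var_prime; congr ideal_gen.
apply: functional_extensionality => f; apply: propositional_extensionality.
split; first by move=> [i [iA ->]]; exists U_(i)%MM; split => //; exists i.
by move=> [m [[i iA ->] ->]]; exists i.
Qed.

Lemma mnm1_le i m : (0 < m i)%N -> (U_(i) <= m)%MM.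
Proof. by move=> mi; apply/mnm_lepP => j; rewrite mnm1E; case: eqP => // <-. Qed.

Lemma upset_unit_exps A m :
  upset (unit_exps A) m <-> exists2 i, i \in A & (0 < m i)%N.
Proof.
split; last by move=> [i iA mi]; exists U_(i)%MM; split; [exists i | exact: mnm1_le].
move=> [g [[i iA ->] /mnm_lepP /(_ i)]]; rewrite mnm1E eqxx => mi.
by exists i.
Qed.

Lemma upset_common_witness M A (ms : seq 'X_{1..n}) :
  (forall m, m \in ms -> exists w, upset M (w + m)%MM /\ ~ upset (unit_exps A) w) ->
  exists W, (forall m, m \in ms -> upset M (W + m)%MM) /\ ~ upset (unit_exps A) W.
Proof.
elim: ms => [|m ms IH] H.
  by exists 0%MM; split => // /upset_unit_exps [i _]; rewrite mnm0E.
have [W [HW nW]] := IH (fun m' Hm' => H m' (mem_behead (s := m :: ms) Hm')).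
have [w [Hw nw]] := H m (mem_head _ _).
exists (W + w)%MM; split.
- move=> m'; rewrite inE => /orP [/eqP ->|Hm'].
  + by apply: upset_mono Hw _; apply/mnm_lepP => i; rewrite !mnmDE; lia.
  + by apply: upset_mono (HW _ Hm') _; apply/mnm_lepP => i; rewrite !mnmDE; lia.
- move/upset_unit_exps => [i iA]; rewrite mnmDE addn_gt0 => /orP [] Hi.
  + by apply: nW; apply/upset_unit_exps; exists i.
  + by apply: nw; apply/upset_unit_exps; exists i.
Qed.

Lemma Ass_monideal_monomial_witness M A :
  Ass (monideal (K:=K) M) (monideal (K:=K) (unit_exps A)) ->
  exists v, forall w, upset (unit_exps A) w <-> upset M (v + w)%MM.
Proof.
move=> [_ [f Hf]].
(* Some monomial [x^m0] of [f] already has [(I : x^m0)] inside [p]: otherwise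
   a monomial outside [p] would multiply all of [f] into [I]. *)
have [m0 [Hm0 H0]] : exists m0, m0 \in msupp f /\
    forall w, upset M (w + m0)%MM -> upset (unit_exps A) w.
  apply: NNPP => Hn.
  have [W [HW nW]] : exists W, (forall m, m \in msupp f -> upset M (W + m)%MM)
      /\ ~ upset (unit_exps A) W.
    apply: upset_common_witness.
    move=> m Hm; apply: NNPP => Hn2; apply: Hn; exists m; split => // w Hw.
    by apply: NNPP => Hw2; apply: Hn2; exists w.
  apply/nW/monidealX/Hf; rewrite /colon mulrC.
  exact/monidealMX.
exists m0 => w; split; last by rewrite addmC; apply: H0.
move=> /upset_unit_exps [i iA wi].
have : monideal (K:=K) (unit_exps A) 'X_[U_(i)].
  by apply/monidealX/upset_unit_exps; exists i; rewrite ?mnm1E ?eqxx.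
move/Hf; rewrite /colon mulrC => /monidealMX /(_ _ Hm0) Hu.
by apply: upset_mono Hu _; rewrite addmC; apply: lepm_add (lepm_refl _) (mnm1_le wi).
Qed.

Definition deletion_gens (I : subsetR n K) (z : 'I_n) m :=
  min_gens I m /\ m z = 0%N.

Lemma deletionE (I : subsetR n K) z : deletion I z = monideal (deletion_gens I z).
Proof. by []. Qed.

Lemma upset_deletion_var_prime A z m :
  upset (deletion_gens (var_prime (K:=K) A) z) m <->
  exists2 i, (i \in A) && (i != z) & (0 < m i)%N.
Proof.
rewrite /deletion_gens var_prime_monideal; split.
- move=> [g [[/min_gens_upset /upset_unit_exps [i iA gi] gz] /mnm_lepP gm]].
  exists i; last exact: leq_trans gi (gm i).
  by rewrite iA; apply: contraTneq gi => ->; rewrite gz.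
move=> [i /andP [iA iz] mi]; exists U_(i)%MM; split; last exact: mnm1_le.
split; last by rewrite mnm1E (negPf iz).
split; first by apply/monidealX/upset_unit_exps; exists i; rewrite ?mnm1E ?eqxx.
move=> m' /monidealX /upset_unit_exps [j jA m'j] /mnm_lepP le.
have ji : j = i.
  by move: (le j) m'j; rewrite mnm1E; case: eqP => // _; rewrite leqn0 => /eqP ->.
subst j; apply/mnmP => k; rewrite mnm1E; move: (le k); rewrite mnm1E.
case: eqP => [<- | _]; last by rewrite leqn0 => /eqP.
by move: m'j; case: (m' i) => [|[|]].
Qed.

Lemma deletion_var_prime_prime A z :
  is_prime_ideal (deletion (var_prime (K:=K) A) z).
Proof.
by apply: (monideal_prime (B := fun i => (i \in A) && (i != z))) => m;
  rewrite upset_deletion_var_prime; split => [[i]|[i []]]; exists i.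
Qed.

Lemma upset_mpow_deletion G z t e : e z = 0%N ->
  upset (mpow_gens (deletion_gens (monideal (K:=K) G) z) t) e <->
  upset (mpow_gens G t) e.
Proof.
have coord0_add a b : (a + b)%MM z = 0%N -> a z = 0%N /\ b z = 0%N.
  by rewrite mnmDE => /eqP; rewrite addn_eq0 => /andP [/eqP -> /eqP ->].
move=> ez; split.
- move=> [d [Hd de]]; apply: (upset_mono _ de).
  by apply: (mpow_gens_upset (Q := fun _ => True)) Hd I => // g [/min_gens_upset].
- move=> [d [Hd de]]; apply: (upset_mono _ de).
  have dz : d z = 0%N by apply/eqP; rewrite -leqn0 -ez (mnm_lepP de).
  apply: (mpow_gens_upset coord0_add _ Hd dz) => g Gg gz.
  have [d' Hd' d'g] := min_gens_exists (upset_self Gg).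
  exists d'; split => //; split => //.
  by apply/eqP; rewrite -leqn0 -gz (mnm_lepP d'g).
Qed.

Lemma Ass_deletion_monomial_witness G A z t v :
  (forall w, upset (unit_exps A) w <-> upset (mpow_gens G t) (v + w)%MM) ->
  v z = 0%N ->
  Ass (ideal_pow (deletion (monideal (K:=K) G) z) t)
      (deletion (var_prime (K:=K) A) z).
Proof.
set D := deletion_gens (monideal (K:=K) G) z => Hv vz.
rewrite ideal_pow_monideal !deletionE; split; first exact: deletion_var_prime_prime.
exists 'X_[v]; apply: monideal_colonX => w; rewrite upset_deletion_var_prime.
split.
- move=> [i /andP [iA iz] wi].
  have vUz : (v + U_(i))%MM z = 0%N by rewrite mnmDE mnm1E (negPf iz) vz.
  have /Hv /(upset_mpow_deletion G t vUz) HD : upset (unit_exps A) U_(i)%MM.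
    by apply/upset_unit_exps; exists i; rewrite ?mnm1E ?eqxx.
  by apply: (upset_mono HD); apply: lepm_add (lepm_refl _) (mnm1_le wi).
- move=> [d [Hd /mnm_lepP dvw]].
  have dz : d z = 0%N by apply: mpow_gens_coord0 Hd => ? [].
  have /(upset_mpow_deletion G t dz) HG : upset (mpow_gens D t) d by apply: upset_self.
  have : upset (mpow_gens G t) (v + (d - v))%MM.
    by apply: (upset_mono HG); apply/mnm_lepP => j; rewrite !mnmDE mnmBE; lia.
  move/Hv/upset_unit_exps => [i iA]; rewrite mnmBE => dvi.
  exists i; last by move: (dvw i); rewrite mnmDE; lia.
  by rewrite iA; apply: contraTneq dvi => ->; rewrite dz.
Qed.

End MonomialIdeals.

Lemma mpolyX_prod_factor n (K : fieldType) s (y : 'I_s -> 'I_n) (r : seq 'I_s)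
    (v : 'X_{1..n}) :
  injective y -> uniq r -> (forall k, k \in r -> 0 < v (y k))%N ->
  exists w, ('X_[v] : {mpoly K[n]}) = 'X_[w] * \prod_(k <- r) 'X_(y k).
Proof.
move=> yinj; elim: r v => [|k r IH] v /=.
  by move=> _ _; exists v; rewrite big_nil mulr1.
move=> /andP [kr ur] Hv.
have le := mnm1_le (Hv k (mem_head _ _)).
have [w Hw] : exists w, ('X_[v - U_(y k)] : {mpoly K[n]}) =
    'X_[w] * \prod_(k <- r) 'X_(y k).
  apply: IH => // k' Hk'; rewrite mnmBE mnm1E.
  have -> : (y k == y k') = false by apply/eqP => /yinj E; move: kr; rewrite E Hk'.
  by rewrite subn0; apply: Hv; rewrite inE Hk' orbT.
by exists w; rewrite -(submK le) mpolyXD Hw big_cons; ring.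
Qed.

Theorem proposition2p1 (n : nat) (K : fieldType)
    (G : 'X_{1..n} -> Prop) (t : nat) (A : {set 'I_n})
    (s : nat) (y : 'I_s -> 'I_n) :
  (0 < t)%N ->
  injective y ->
  (forall i : 'I_s,
     ~ Ass (ideal_pow (deletion (monideal (K:=K) G) (y i)) t)
           (deletion (var_prime (K:=K) A) (y i))) ->
  (Ass (ideal_pow (monideal (K:=K) G) t) (var_prime (K:=K) A) <->
   Ass (colon (ideal_pow (monideal (K:=K) G) t) (\prod_(i < s) 'X_(y i)))
       (var_prime (K:=K) A)).
Proof.
move=> _ yinj notAss_del; split; last exact: Ass_colon.
rewrite ideal_pow_monideal var_prime_monideal => HAss.
have [v Hv] := Ass_monideal_monomial_witness HAss.
have v_pos k : (0 < v (y k))%N.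
  rewrite lt0n; apply/negP => /eqP vyk.
  by apply: (notAss_del k); apply: Ass_deletion_monomial_witness Hv vyk.
have [w Hw] := mpolyX_prod_factor K yinj (index_enum_uniq 'I_s) (fun k _ => v_pos k).
split; first exact: HAss.1.
exists 'X_[w] => g; rewrite /colon -mulrA -Hw.
exact: monideal_colonX.
Qed.
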